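(* Let $\Gamma=(G,w,\ell)$ be a tropical curve. Then the map $$\mathcal C_G\longrightarrow R^{\mathrm{trop}}_\Gamma,\qquad P\longmapsto [F_P]$$ is a bijection.
   Context: A tropical curve is a triple $\Gamma=(G,w,\ell)$ where $G=(V,E)$ is a finite connected graph (loops and multiple edges allowed), $w\colon V\to\mathbb Z_{\ge 0}$ is a weight function with $2w(v)-2+\deg_G(v)>0$ for all $v$ (degrees count loops twice), and $\ell\colon E\to\mathbb R_{>0}$. Its genus is $g=\sum_v w(v)+|E|-|V|+1$. $\Gamma$ is regarded as a metric space by identifying each edge $e$ with a segment (a circle if $e$ is a loop) of length $\ell(e)$, glued at vertices; $p_e$ denotes the mid-point of $e$. A divisor on $\Gamma$ is a finite formal $\mathbb Z$-combination of points of $\Gamma$. A rational function is a continuous piecewise linear $f\colon\Gamma\to\mathbb R$ with integer slopes and finitely many pieces; $\operatorname{div}(f)=\sum_p \operatorname{ord}_p(f)p$, where $\operatorname{ord}_p(f)$ is the sum of the outgoing slopes of $f$ at $p$. $\operatorname{Pic}(\Gamma)$ is the group of divisors modulo divisors of rational functions; $[D]$ denotes the class and $D\sim D'$ means $[D]=[D']$. $\mathcal C_G$ is the set of subsets $P\subseteq E$ such that every vertex has even degree in the subgraph spanned by $P$ (loops counting twice); it is an $\mathbb F_2$-vector space under symmetric difference (it is the kernel of the boundary map $\mathbb F_2^E\to\mathbb F_2^V$). For $P\in\mathcal C_G$ set $F_P:=\sum_{v\in V}\frac{\deg_P(v)}{2}v-\sum_{e\in P}p_e$. The set of square roots of zero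 is $R^{\mathrm{trop}}_\Gamma=\{[D]\in\operatorname{Pic}(\Gamma): [2D]=0\}$. *)

From HB Require Import structures.
From mathcomp Require Import all_boot all_order all_algebra.
From mathcomp Require Import reals.
Set Implicit Arguments. Unset Strict Implicit. Unset Printing Implicit Defensive.
Import Order.TTheory GRing.Theory Num.Theory.
Local Open Scope ring_scope.

(* G = (V, E) is a finite graph given by
   endpoint maps src, tgt : E -> V; loops (src e = tgt e) and multiple edges are
   allowed.  Each edge e is oriented (only for coordinates): the point at
   distance x from src e along e. *)
Record tcurve (R : realType) := TCurve {
  tV : finType;
  tE : finType;
  src : tE -> tV;
  tgt : tE -> tV;
  wt : tV -> nat;
  len : tE -> R;
  len_pos : forall e, 0 < len e;
  V_nonempty : (0 < #|tV|)%N;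
  connected : forall u v : tV,
    connect [rel a b | [exists e, ((src e == a) && (tgt e == b))
                                || ((src e == b) && (tgt e == a))]] u v;
  (* stability: 2 w(v) - 2 + deg(v) > 0, loops counted twice *)
  stable : forall v : tV,
    (2 < 2 * wt v + (#|[set e | src e == v]| + #|[set e | tgt e == v]|))%N
}.

Section Tropical.
Variable R : realType.
Variable G : tcurve R.

Local Notation V := (tV G).
Local Notation E := (tE G).

Definition degP (P : {set E}) (v : V) : nat :=
  (#|[set e in P | src e == v]| + #|[set e in P | tgt e == v]|)%N.

Definition in_cycle_space (P : {set E}) : bool :=
  [forall v, ~~ odd (degP P v)].

(* Points of Gamma: a vertex (inl v) or the point (inr (e, x)) of edge e at
   distance x from src e, with 0 < x < len e. *)
Definition point := (V + (E * R))%type.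

Definition valid_point (p : point) : Prop :=
  match p with
  | inl _ => True
  | inr (e, x) => 0 < x < len e
  end.

Definition midpoint (e : E) : point := inr (e, len e / 2).

Definition is_divisor (D : point -> int) : Prop :=
  (forall p, ~ valid_point p -> D p = 0) /\
  exists s : seq point, forall p, D p != 0 -> p \in s.

(* F_P = sum_v deg_P(v)/2 v - sum_{e in P} p_e *)
Definition F_ (P : {set E}) : point -> int :=
  fun p => match p with
  | inl v => ((degP P v)./2)%:Z
  | inr (e, x) => if (e \in P) && (x == len e / 2) then -1 else 0
  end.

Definition edge_val (f : point -> R) (e : E) (x : R) : R :=
  if x == 0 then f (inl (src e))
  else if x == len e then f (inl (tgt e))
  else f (inr (e, x)).

Definition is_rational (f : point -> R) : Prop :=
  forall e : E, exists (bs : seq R) (sl : seq int),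
    let pts := 0 :: rcons bs (len e) in
    [/\ sorted <%R pts, size sl = (size pts).-1 &
      forall i, (i < size sl)%N -> forall x,
        nth 0 pts i <= x <= nth 0 pts i.+1 ->
        edge_val f e x = edge_val f e (nth 0 pts i)
                         + (nth 0 sl i)%:~R * (x - nth 0 pts i)].

Definition out_slope (f : point -> R) (e : E) (x dir : R) (s : int) : Prop :=
  exists2 d : R, 0 < d & forall h, 0 < h < d ->
    edge_val f e (x + dir * h) = edge_val f e x + s%:~R * h.

Definition has_ord (f : point -> R) (p : point) (n : int) : Prop :=
  match p with
  | inl v => exists (a b : E -> int),
      (forall e, src e = v -> out_slope f e 0 1 (a e)) /\
      (forall e, tgt e = v -> out_slope f e (len e) (-1) (b e)) /\
      n = \sum_(e | src e == v) a e + \sum_(e | tgt e == v) b e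
  | inr (e, x) => exists a b : int,
      out_slope f e x 1 a /\ out_slope f e x (-1) b /\ n = a + b
  end.

Definition is_div_of (f : point -> R) (D : point -> int) : Prop :=
  forall p, valid_point p -> has_ord f p (D p).

Definition lin_equiv (D D' : point -> int) : Prop :=
  exists f, is_rational f /\ is_div_of f (fun p => D p - D' p).

Definition is_sqrt_zero (D : point -> int) : Prop :=
  is_divisor D /\ lin_equiv (fun p => 2 * D p) (fun _ => 0).

End Tropical.

From HB Require Import structures.
From mathcomp Require Import all_boot all_order all_algebra.
From mathcomp Require Import reals.
From mathcomp Require Import boolp zify ring lra.
Import Order.TTheory GRing.Theory Num.Theory.
Local Open Scope ring_scope.
Set Implicit Arguments. Unset Strict Implicit. Unset Printing Implicit Defensive.

(* The key object is the tent function T_P of an edge set P: zero at the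
   vertices and outside P, and on an edge of P rising with slope 1 up to the
   mid-point and descending back.  Its divisor is
   sum_v deg_P(v) v - 2 sum_(e in P) p_e, which equals 2 F_P when P is a cycle;
   hence [F_P] is a square root of zero.
   - Injectivity: if F_P - F_Q = div f, then 2 f - (T_P - T_Q) has divisor
     zero.  A rational function with zero divisor is affine on each edge, and
     its slopes form a balanced gradient flow, hence vanish (an energy
     argument).  Near the source of an edge e this gives
     2 slope(f) = 1_P(e) - 1_Q(e), forcing 1_P(e) = 1_Q(e).
   - Surjectivity: if div f = 2 D, all slopes of f along an edge have the same
     parity, since they jump by even integers; the set P of edges with odd
     slopes is a cycle, and (f - T_P) / 2 has integer slopes and divisor
     D - F_P. *)

Section AffinePieces.
Variable R : realFieldType.

Definition affine_on (g : R -> R) (x y : R) (k : int) : Prop :=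
  forall t, x <= t <= y -> g t = g x + k%:~R * (t - x).

Lemma affine_on_sub g x y k x' y' : affine_on g x y k ->
  x <= x' -> x' <= y' -> y' <= y -> affine_on g x' y' k.
Proof.
move=> H h1 h2 h3 t /andP[t1 t2].
rewrite (H t); last by apply/andP; split; lra.
rewrite (H x'); last by apply/andP; split; lra.
ring.
Qed.

Lemma affine_on_cat g x y z k : affine_on g x y k -> affine_on g y z k ->
  x <= y -> y <= z -> affine_on g x z k.
Proof.
move=> H1 H2 h1 h2 t /andP[t1 t2].
have [ty|ty] := leP t y; first by apply: H1; apply/andP; split.
rewrite H2; last by apply/andP; split; lra.
rewrite H1; last by apply/andP; split; lra.
ring.
Qed.

Lemma affine_on_slope_uniq g x y k x' y' k' a b :
  affine_on g x y k -> affine_on g x' y' k' ->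
  x <= a -> x' <= a -> a < b -> b <= y -> b <= y' -> k = k'.
Proof.
move=> H1 H2 h1 h2 hab h3 h4.
have E1 := affine_on_sub H1 h1 (ltW hab) h3.
have E2 := affine_on_sub H2 h2 (ltW hab) h4.
have hb : a <= b <= b by rewrite lexx ltW.
have hne : b - a != 0 by rewrite subr_eq0 gt_eqF.
by have := E1 b hb; rewrite (E2 b hb) => /addrI /(mulIf hne) /intr_inj.
Qed.

End AffinePieces.

Section SortedReals.
Variable R : realFieldType.
Implicit Types s : seq R.

Lemma sorted_nth_lt s i j : sorted <%R s -> (i < j)%N -> (j < size s)%N ->
  nth 0 s i < nth 0 s j.
Proof.
move=> hs ij js; apply: (sorted_ltn_nth lt_trans) => //; rewrite inE //.
exact: ltn_trans ij js.
Qed.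

Lemma sorted_nth_le s i j : sorted <%R s -> (i <= j)%N -> (j < size s)%N ->
  nth 0 s i <= nth 0 s j.
Proof.
move=> hs; rewrite leq_eqVlt => /orP[/eqP->|ij] js; first exact: lexx.
exact/ltW/sorted_nth_lt.
Qed.

Lemma sorted_locate s x : sorted <%R s -> nth 0 s 0 <= x -> x < last 0 s ->
  exists i, (i.+1 < size s)%N /\ nth 0 s i <= x < nth 0 s i.+1.
Proof.
elim: s => [|a s IH]; first by move=> _ /= h1 h2; lra.
case: s IH => [|b s] IH /=; first by move=> _ h1 h2; lra.
move=> /andP[ab sb] h1 h2.
have [xb|bx] := ltP x b; first by exists 0%N; split => //; rewrite h1 xb.
by have [i [hi hx]] := IH sb bx h2; exists i.+1.
Qed.

Lemma sorted_gap_free s i x : sorted <%R s -> x \in s -> (i.+1 < size s)%N ->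
  ~~ (nth 0 s i < x < nth 0 s i.+1).
Proof.
move=> srt xs hi; apply/negP => /andP[h1 h2].
have jl : (index x s < size s)%N by rewrite index_mem.
have hj := nth_index 0 xs.
have [ji|ij] := leqP (index x s) i.
  by have := sorted_nth_le srt ji (ltnW hi); rewrite hj; lra.
by have := sorted_nth_le srt ij jl; rewrite hj; lra.
Qed.

End SortedReals.

Lemma choice_seq (T : Type) (x0 : T) (n : nat) (P : nat -> T -> Prop) :
  (forall i, (i < n)%N -> exists t, P i t) ->
  exists s : seq T, size s = n /\ forall i, (i < n)%N -> P i (nth x0 s i).
Proof.
elim: n => [|n IH] H; first by exists [::].
have [s [hs hP]] := IH (fun i hi => H i (leqW hi)).
have [t ht] := H n (ltnSn n).
exists (rcons s t); split; first by rewrite size_rcons hs.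
move=> i; rewrite ltnS leq_eqVlt => /orP[/eqP->|hi].
  by rewrite nth_rcons hs ltnn eqxx.
by rewrite nth_rcons hs hi; apply: hP.
Qed.

(* A flow s on a finite graph that is balanced at every vertex and is the
   gradient of a potential h (with positive edge lengths) vanishes: its energy
   sum_e s_e^2 l_e equals sum_v h(v) (inflow - outflow) = 0. *)
Section BalancedGradient.
Variables (R : realDomainType) (V E : finType) (src tgt : E -> V) (L : E -> R).
Hypothesis L_pos : forall e, 0 < L e.

Lemma balanced_gradient_eq0 (h : V -> R) (s : E -> R) :
  (forall e, h (tgt e) - h (src e) = s e * L e) ->
  (forall v, \sum_(e | tgt e == v) s e = \sum_(e | src e == v) s e) ->
  forall e, s e = 0.
Proof.
move=> hgrad hbal.
have hsplit (p : E -> V) :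
    \sum_e s e * h (p e) = \sum_v h v * \sum_(e | p e == v) s e.
  rewrite (partition_big p predT) //=; apply: eq_bigr => v _.
  by rewrite mulr_sumr; apply: eq_bigr => e /eqP <-; rewrite mulrC.
have henergy : \sum_e s e * (s e * L e) = 0.
  transitivity (\sum_e (s e * h (tgt e) - s e * h (src e))).
    by apply: eq_bigr => e _; rewrite -hgrad mulrBr.
  rewrite sumrB !hsplit -sumrB big1 // => v _.
  by rewrite -mulrBr hbal subrr mulr0.
have hnn e : true -> 0 <= s e * (s e * L e).
  by move=> _; rewrite mulrA -expr2 mulr_ge0 ?sqr_ge0 // ltW.
move=> e; have /eqP := @psumr_eq0P _ _ _ _ hnn henergy e isT.
by rewrite mulrA mulf_eq0 (gt_eqF (L_pos e)) orbF mulf_eq0 orbb => /eqP.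
Qed.

End BalancedGradient.

Section EdgeFunctions.
Variable R : realType.
Variable G : tcurve R.
Local Notation E := (tE G).
Local Notation L := (@len R G).
Local Notation pt := (point G).
Implicit Types (f : pt -> R) (e : E).

Lemma edge_val_src f e : edge_val f e 0 = f (inl (src e)).
Proof. by rewrite /edge_val eqxx. Qed.

Lemma edge_val_tgt f e : edge_val f e (L e) = f (inl (tgt e)).
Proof. by rewrite /edge_val (gt_eqF (len_pos e)) eqxx. Qed.

Lemma affine_out_right f e x y k : x < y ->
  affine_on (edge_val f e) x y k -> out_slope f e x 1 k.
Proof.
move=> hxy H; exists (y - x); first lra.
move=> h /andP[h1 h2]; rewrite mul1r (H (x + h)); last by apply/andP; split; lra.
ring.
Qed.

Lemma affine_out_left f e x y k : x < y ->
  affine_on (edge_val f e) x y k -> out_slope f e y (-1) (-k).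
Proof.
move=> hxy H; exists (y - x); first lra.
move=> h /andP[h1 h2]; rewrite (H y); last by apply/andP; split; lra.
rewrite (H (y + -1 * h)); last by apply/andP; split; lra.
rewrite mulrNz; ring.
Qed.

Lemma out_slope_uniq f e x dir a b :
  out_slope f e x dir a -> out_slope f e x dir b -> a = b.
Proof.
move=> [d1 d1p H1] [d2 d2p H2].
set h := Num.min d1 d2 / 2.
have m0 : 0 < Num.min d1 d2 by rewrite lt_min d1p d2p.
have m1 : Num.min d1 d2 <= d1 by rewrite ge_min lexx.
have m2 : Num.min d1 d2 <= d2 by rewrite ge_min lexx orbT.
have hne : h != 0 by rewrite /h; lra.
have c1 : 0 < h < d1 by rewrite /h; apply/andP; split; lra.
have c2 : 0 < h < d2 by rewrite /h; apply/andP; split; lra.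
by have := H1 h c1; rewrite (H2 h c2) => /addrI /(mulIf hne) /intr_inj.
Qed.

Lemma out_slope_affine_right f e x B a : x < B -> out_slope f e x 1 a ->
  exists y, [/\ x < y, y <= B & affine_on (edge_val f e) x y a].
Proof.
move=> hxB [d dp H].
have m1 : Num.min d (B - x) <= d by rewrite ge_min lexx.
have m2 : Num.min d (B - x) <= B - x by rewrite ge_min lexx orbT.
have m0 : 0 < Num.min d (B - x) by rewrite lt_min dp subr_gt0 hxB.
set m := Num.min d (B - x) in m0 m1 m2 *.
exists (x + m / 2); split; [lra | lra |] => t /andP[t1 t2].
have [->|tx] := eqVneq t x; first by rewrite subrr mulr0 addr0.
have tx' : x < t by rewrite lt_neqAle eq_sym tx t1.
rewrite -(H (t - x)); last by apply/andP; split; lra.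
by have -> : x + 1 * (t - x) = t by ring.
Qed.

Lemma out_slope_affine_left f e x B b : B < x -> out_slope f e x (-1) b ->
  exists y, [/\ B <= y, y < x & affine_on (edge_val f e) y x (-b)].
Proof.
move=> hxB [d dp H].
have m1 : Num.min d (x - B) <= d by rewrite ge_min lexx.
have m2 : Num.min d (x - B) <= x - B by rewrite ge_min lexx orbT.
have m0 : 0 < Num.min d (x - B) by rewrite lt_min dp subr_gt0 hxB.
set m := Num.min d (x - B) in m0 m1 m2 *.
have val_left t : 0 < x - t < d -> edge_val f e t = edge_val f e x + b%:~R * (x - t).
  by move=> ht; rewrite -H //; congr edge_val; ring.
exists (x - m / 2); split; [lra | lra |] => t /andP[t1 t2].
rewrite mulrNz (val_left (x - m / 2)); last by apply/andP; split; lra.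
have [->|tx] := eqVneq t x; first by ring.
have tx' : t < x by rewrite lt_neqAle tx t2.
by rewrite val_left; [ring | apply/andP; split; lra].
Qed.

Definition breakpoints e (bs : seq R) : seq R := 0 :: rcons bs (L e).

Definition edge_pieces f e (bs : seq R) (sl : seq int) : Prop :=
  [/\ sorted <%R (breakpoints e bs), size sl = (size bs).+1 &
      forall i, (i < size sl)%N ->
        affine_on (edge_val f e) (nth 0 (breakpoints e bs) i)
          (nth 0 (breakpoints e bs) i.+1) (nth 0 sl i)].

Lemma size_breakpoints e bs : size (breakpoints e bs) = (size bs).+2.
Proof. by rewrite /breakpoints /= size_rcons. Qed.

Lemma breakpoints_last e bs : nth 0 (breakpoints e bs) (size bs).+1 = L e.
Proof. by rewrite /breakpoints /= nth_rcons ltnn eqxx. Qed.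

Lemma rational_piecesP f :
  is_rational f <-> forall e, exists bs sl, edge_pieces f e bs sl.
Proof.
split=> H e; have [bs [sl /= [s1 s2 s3]]] := H e; exists bs, sl.
  by split => //; rewrite s2 /= size_rcons.
by split => //; rewrite s2 size_rcons.
Qed.

Lemma breakpoint_inner e bs j : sorted <%R (breakpoints e bs) ->
  (0 < j)%N -> (j < (size bs).+1)%N -> 0 < nth 0 (breakpoints e bs) j < L e.
Proof.
move=> srt j0 js; apply/andP; split.
  by apply: (sorted_nth_lt srt j0); rewrite size_breakpoints ltnW.
by rewrite -(breakpoints_last e bs); apply: sorted_nth_lt; rewrite ?size_breakpoints.
Qed.

Definition affine_off f e (S : seq R) : Prop :=
  forall x y, 0 <= x -> x < y -> y <= L e -> (forall s, s \in S -> ~~ (x < s < y)) ->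
  exists k, affine_on (edge_val f e) x y k.

Lemma pieces_affine_off f e bs sl : edge_pieces f e bs sl -> affine_off f e bs.
Proof.
case=> srt hsz hseg x y x0 xy yL hS.
have xl : x < last 0 (breakpoints e bs) by rewrite /breakpoints /= last_rcons; lra.
have [i [hi /andP[h1 h2]]] := sorted_locate srt x0 xl.
set w := nth 0 (breakpoints e bs) i.+1 in h2.
have hyw : y <= w.
  have : w \in breakpoints e bs by rewrite mem_nth.
  rewrite /breakpoints in_cons mem_rcons in_cons => /or3P[/eqP w0|/eqP wL|wb].
  - lra.
  - rewrite wL; lra.
  - by have := hS w wb; rewrite h2 /= -leNgt.
exists (nth 0 sl i); apply: affine_on_sub (hseg i _) h1 (ltW xy) hyw.
by rewrite hsz; rewrite size_breakpoints in hi.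
Qed.

Definition interior_breaks e (S : seq R) : seq R :=
  sort <=%R (undup [seq s <- S | 0 < s < L e]).

Lemma mem_interior_breaks e S s :
  (s \in interior_breaks e S) = (s \in S) && (0 < s < L e).
Proof. by rewrite mem_sort mem_undup mem_filter andbC. Qed.

Lemma interior_breaks_sorted e S : sorted <%R (breakpoints e (interior_breaks e S)).
Proof.
rewrite /breakpoints /= rcons_path path_min_sorted; last first.
  by apply/allP => s; rewrite mem_interior_breaks => /andP[_ /andP[]].
rewrite sort_lt_sorted undup_uniq /=.
have := mem_last 0 (interior_breaks e S); rewrite in_cons => /orP[/eqP->|].
  exact: len_pos.
by rewrite mem_interior_breaks => /andP[_ /andP[]].
Qed.

Lemma affine_off_pieces f e S : affine_off f e S -> exists bs sl, edge_pieces f e bs sl.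
Proof.
move=> H; set bs := interior_breaks e S; set pts := breakpoints e bs.
have srt : sorted <%R pts := interior_breaks_sorted e S.
have hsz : size pts = (size bs).+2 := size_breakpoints e bs.
have [sl [hs hP]] : exists sl : seq int, size sl = (size bs).+1 /\
    forall i, (i < (size bs).+1)%N ->
      affine_on (edge_val f e) (nth 0 pts i) (nth 0 pts i.+1) (nth 0 sl i).
  apply: (@choice_seq _ 0 _ (fun i k =>
    affine_on (edge_val f e) (nth 0 pts i) (nth 0 pts i.+1) k)) => i hi.
  have hi' : (i.+1 < size pts)%N by rewrite hsz.
  have p0 : 0 <= nth 0 pts i by apply: (sorted_nth_le srt (leq0n i)); rewrite ltnW.
  have p1 : nth 0 pts i < nth 0 pts i.+1 by exact: sorted_nth_lt.
  have p2 : nth 0 pts i.+1 <= L e.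
    by rewrite -(breakpoints_last e bs); apply: sorted_nth_le; rewrite ?hsz.
  apply: H => // s sS; apply/negP => hs; move/andP: (hs) => [s1 s2].
  have sb : s \in pts.
    rewrite /pts /breakpoints in_cons mem_rcons in_cons mem_interior_breaks sS.
    by rewrite (le_lt_trans p0 s1) (lt_le_trans s2 p2) !orbT.
  by move: (sorted_gap_free srt sb hi'); rewrite hs.
by exists bs, sl; rewrite /edge_pieces hs; split.
Qed.

Lemma rational_affine_offP f :
  is_rational f <-> forall e, exists S, affine_off f e S.
Proof.
split=> [/rational_piecesP H e | H].
  by have [bs [sl /pieces_affine_off hS]] := H e; exists bs.
by apply/rational_piecesP => e; have [S /affine_off_pieces] := H e.
Qed.

End EdgeFunctions.

Section EdgeDivisors.
Variable R : realType.
Variable G : tcurve R.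
Local Notation E := (tE G).
Local Notation L := (@len R G).
Local Notation pt := (point G).
Implicit Types (f : pt -> R) (e : E) (D : pt -> int).

Lemma div_at_breakpoint f D e bs sl j : edge_pieces f e bs sl -> is_div_of f D ->
  (0 < j)%N -> (j < size sl)%N ->
  D (inr (e, nth 0 (breakpoints e bs) j)) = nth 0 sl j - nth 0 sl j.-1.
Proof.
move=> [srt hsz hseg] hd j0 js.
have /hd [a [b [ha [hb ->]]]] : valid_point (inr (e, nth 0 (breakpoints e bs) j)).
  by apply: breakpoint_inner; rewrite // -hsz.
have hsp := size_breakpoints e bs.
have lt1 : nth 0 (breakpoints e bs) j < nth 0 (breakpoints e bs) j.+1.
  by apply: sorted_nth_lt; rewrite // hsp -hsz.
have lt2 : nth 0 (breakpoints e bs) j.-1 < nth 0 (breakpoints e bs) j.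
  by apply: sorted_nth_lt; rewrite ?ltn_predL // hsp ltnW // -hsz.
have prev := hseg j.-1 (leq_ltn_trans (leq_pred j) js); rewrite prednK // in prev.
rewrite (out_slope_uniq ha (affine_out_right lt1 (hseg j js))).
by rewrite (out_slope_uniq hb (affine_out_left lt2 prev)).
Qed.

Lemma piece_slope f e bs sl x y k : edge_pieces f e bs sl ->
  0 <= x -> x < y -> y <= L e -> affine_on (edge_val f e) x y k ->
  exists2 i, (i < size sl)%N & k = nth 0 sl i.
Proof.
case=> srt hsz hseg x0 xy yL H.
have xl : x < last 0 (breakpoints e bs) by rewrite /breakpoints /= last_rcons; lra.
have [i [hi /andP[h1 h2]]] := sorted_locate srt x0 xl.
have il : (i < size sl)%N by rewrite hsz; rewrite size_breakpoints in hi.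
exists i => //; set m := Num.min y (nth 0 (breakpoints e bs) i.+1).
apply: (affine_on_slope_uniq (a := x) (b := m) H (hseg i il)) => //.
- by rewrite lt_min xy h2.
- by rewrite ge_min lexx.
- by rewrite ge_min lexx orbT.
Qed.

Lemma rational_start_piece f e : is_rational f ->
  exists y, 0 < y <= L e / 2 /\ exists k, affine_on (edge_val f e) 0 y k.
Proof.
move=> /rational_piecesP /(_ e) [bs [sl [srt hsz hseg]]].
have Lp := len_pos e.
have p1 : 0 < nth 0 (breakpoints e bs) 1.
  by apply: (sorted_nth_lt srt (ltn0Sn 0)); rewrite size_breakpoints.
set m := Num.min (nth 0 (breakpoints e bs) 1) (L e / 2).
have m0 : 0 < m by rewrite lt_min p1 /=; lra.
exists m; split; first by rewrite m0 ge_min lexx orbT.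
exists (nth 0 sl 0); apply: affine_on_sub (hseg 0%N _) (lexx _) (ltW m0) _.
  by rewrite hsz.
by rewrite ge_min lexx.
Qed.

Lemma uniform_pieces_affine f e bs sl k : edge_pieces f e bs sl ->
  (forall i, (i < size sl)%N -> nth 0 sl i = k) -> affine_on (edge_val f e) 0 (L e) k.
Proof.
move=> [srt hsz hseg] hk; set pts := breakpoints e bs.
have hsp : size pts = (size bs).+2 := size_breakpoints e bs.
have hall i : (i < size sl)%N -> affine_on (edge_val f e) 0 (nth 0 pts i.+1) k.
  elim: i => [|i IH] hi; first by rewrite -(hk 0%N hi); exact: (hseg 0%N hi).
  apply: (affine_on_cat (IH (ltnW hi))).
    by rewrite -(hk _ hi); exact: (hseg i.+1 hi).
    by apply: (sorted_nth_le srt (leq0n i.+1)); rewrite hsp -hsz ltnW.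
  by apply/ltW/sorted_nth_lt; rewrite // hsp -hsz.
by rewrite -(breakpoints_last e bs); apply: hall; rewrite hsz.
Qed.

Lemma zero_div_edge_affine f e : is_rational f -> is_div_of f (fun _ => 0) ->
  exists k, affine_on (edge_val f e) 0 (L e) k.
Proof.
move=> /rational_piecesP /(_ e) [bs [sl hp]] hd; exists (nth 0 sl 0).
apply: (uniform_pieces_affine hp); elim=> [//|i IH] hi.
have /eqP := div_at_breakpoint hp hd (ltn0Sn i) hi.
by rewrite eq_sym subr_eq0 /= => /eqP ->; exact: IH (ltnW hi).
Qed.

(* ... and then it is constant: its slopes form a balanced gradient flow *)
Lemma zero_div_flat f : is_rational f -> is_div_of f (fun _ => 0) ->
  forall e, affine_on (edge_val f e) 0 (L e) 0.
Proof.
move=> hr hd.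
have [s hs] := choice (fun e => zero_div_edge_affine e hr hd).
have hgrad e : f (inl (tgt e)) - f (inl (src e)) = (s e)%:~R * L e.
  have := hs e (L e); rewrite edge_val_tgt edge_val_src => ->; first by ring.
  by rewrite lexx ltW ?len_pos.
have hbal v : \sum_(e | tgt e == v) (s e)%:~R = \sum_(e | src e == v) (s e)%:~R :> R.
  have [a [b [ha [hb /= h0]]]] := hd (inl v) I.
  have ea : \sum_(e | src e == v) a e = \sum_(e | src e == v) s e.
    apply: eq_bigr => e /eqP he.
    exact: out_slope_uniq (ha e he) (affine_out_right (len_pos e) (hs e)).
  have eb : \sum_(e | tgt e == v) b e = - \sum_(e | tgt e == v) s e.
    rewrite -sumrN; apply: eq_bigr => e /eqP he.
    exact: out_slope_uniq (hb e he) (affine_out_left (len_pos e) (hs e)).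
  have hZ : \sum_(e | tgt e == v) s e = \sum_(e | src e == v) s e.
    by rewrite ea eb in h0; apply/eqP; rewrite eq_sym -subr_eq0 -h0.
  by have := congr1 (fun z : int => z%:~R : R) hZ; rewrite !rmorph_sum.
move=> e; have /eqP := balanced_gradient_eq0 (@len_pos _ G)
                        (h := fun v => f (inl v)) hgrad hbal e.
by rewrite intr_eq0 => /eqP s0; have := hs e; rewrite s0.
Qed.

(* if the divisor of f is even, all slopes of f along an edge have the same
   parity, since they differ by sums of jumps *)
Lemma even_div_slopes_congr f D e : is_rational f -> is_div_of f D ->
  (forall p, (2 %| D p)%Z) ->
  forall x y k x' y' k', 0 <= x -> x < y -> y <= L e ->
  0 <= x' -> x' < y' -> y' <= L e ->
  affine_on (edge_val f e) x y k -> affine_on (edge_val f e) x' y' k' -> (2 %| k - k')%Z.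
Proof.
move=> /rational_piecesP /(_ e) [bs [sl hp]] hd hD x y k x' y' k'.
move=> h1 h2 h3 h4 h5 h6 H H'.
have hall i : (i < size sl)%N -> (2 %| nth 0 sl i - nth 0 sl 0)%Z.
  elim: i => [|i IH] hi; first by rewrite subrr dvdz0.
  rewrite -[_ - _](subrKA (nth 0 sl i)) -(div_at_breakpoint hp hd (ltn0Sn i) hi).
  by rewrite rpredD // IH // ltnW.
have [i hi ->] := piece_slope hp h1 h2 h3 H.
have [i' hi' ->] := piece_slope hp h4 h5 h6 H'.
by rewrite -(subrKA (nth 0 sl 0)) rpredD ?hall // -opprB rpredN hall.
Qed.

End EdgeDivisors.

Section Combinations.
Variable R : realType.
Variable G : tcurve R.
Local Notation E := (tE G).
Local Notation L := (@len R G).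
Local Notation pt := (point G).
Implicit Types (f : pt -> R) (e : E).

Definition comb (a b : R) f1 f2 : pt -> R := fun p => a * f1 p + b * f2 p.

Lemma edge_val_comb a b f1 f2 e t :
  edge_val (comb a b f1 f2) e t = a * edge_val f1 e t + b * edge_val f2 e t.
Proof. by rewrite /edge_val /comb; case: ifP => _ //; case: ifP. Qed.

Lemma affine_comb a b f1 f2 e x y k1 k2 (s : int) :
  affine_on (edge_val f1 e) x y k1 -> affine_on (edge_val f2 e) x y k2 ->
  s%:~R = a * k1%:~R + b * k2%:~R -> affine_on (edge_val (comb a b f1 f2) e) x y s.
Proof. by move=> H1 H2 hs t ht; rewrite !edge_val_comb H1 // H2 // hs; ring. Qed.

Lemma out_slope_comb a b f1 f2 e x dir k1 k2 (s : int) :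
  out_slope f1 e x dir k1 -> out_slope f2 e x dir k2 ->
  s%:~R = a * k1%:~R + b * k2%:~R -> out_slope (comb a b f1 f2) e x dir s.
Proof.
move=> [d1 d1p H1] [d2 d2p H2] hs.
exists (Num.min d1 d2); first by rewrite lt_min d1p d2p.
move=> h /andP[h0]; rewrite lt_min => /andP[hd1 hd2].
by rewrite !edge_val_comb (H1 h) ?h0 // (H2 h) ?h0 // hs; ring.
Qed.

Lemma comb_rational a b f1 f2 : is_rational f1 -> is_rational f2 ->
  (forall e x y k1 k2, 0 <= x -> x < y -> y <= L e ->
     affine_on (edge_val f1 e) x y k1 -> affine_on (edge_val f2 e) x y k2 ->
     exists s : int, s%:~R = a * k1%:~R + b * k2%:~R) ->
  is_rational (comb a b f1 f2).
Proof.
move=> /rational_affine_offP H1 /rational_affine_offP H2 Hint.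
apply/rational_affine_offP => e.
have [S1 hS1] := H1 e; have [S2 hS2] := H2 e; exists (S1 ++ S2).
move=> x y x0 xy yL hS.
have [k1 h1] : exists k1, affine_on (edge_val f1 e) x y k1.
  by apply: hS1 => // s hs; apply: hS; rewrite mem_cat hs.
have [k2 h2] : exists k2, affine_on (edge_val f2 e) x y k2.
  by apply: hS2 => // s hs; apply: hS; rewrite mem_cat hs orbT.
have [s hs] := Hint e x y k1 k2 x0 xy yL h1 h2.
by exists s; apply: affine_comb h1 h2 hs.
Qed.

Definition edge_dir e (x dir : R) : Prop :=
  (0 <= x < L e /\ dir = 1) \/ (0 < x <= L e /\ dir = -1).

(* an integer value equals its floor; used to name the combined slopes *)
Lemma floor_int (r : R) : (exists s : int, s%:~R = r) -> (Num.floor r)%:~R = r.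
Proof. by case=> s <-; rewrite intrKfloor. Qed.

Lemma comb_has_ord a b f1 f2 p n1 n2 n :
  (forall e x dir k1 k2, edge_dir e x dir ->
     out_slope f1 e x dir k1 -> out_slope f2 e x dir k2 ->
     exists s : int, s%:~R = a * k1%:~R + b * k2%:~R) ->
  valid_point p -> has_ord f1 p n1 -> has_ord f2 p n2 ->
  n%:~R = a * n1%:~R + b * n2%:~R -> has_ord (comb a b f1 f2) p n.
Proof.
pose c k1 k2 := Num.floor (a * k1%:~R + b * k2%:~R).
case: p => [v|[e x]] Hint /=.
  move=> _ [a1 [b1 [ha1 [hb1 ->]]]] [a2 [b2 [ha2 [hb2 ->]]]] hn.
  have HA e : src e = v -> (c (a1 e) (a2 e))%:~R = a * (a1 e)%:~R + b * (a2 e)%:~R.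
    move=> he; apply/floor_int/(Hint e 0 1 _ _ _ (ha1 e he) (ha2 e he)).
    by left; rewrite lexx len_pos.
  have HB e : tgt e = v -> (c (b1 e) (b2 e))%:~R = a * (b1 e)%:~R + b * (b2 e)%:~R.
    move=> he; apply/floor_int/(Hint e (L e) (-1) _ _ _ (hb1 e he) (hb2 e he)).
    by right; rewrite lexx len_pos.
  exists (fun e => c (a1 e) (a2 e)), (fun e => c (b1 e) (b2 e)); split.
    by move=> e he; apply: out_slope_comb (ha1 e he) (ha2 e he) (HA e he).
  split; first by move=> e he; apply: out_slope_comb (hb1 e he) (hb2 e he) (HB e he).
  apply: (@intr_inj R); rewrite hn !rmorphD !rmorph_sum /=.
  rewrite (eq_bigr _ (fun e he => HA e (eqP he))) (eq_bigr _ (fun e he => HB e (eqP he))).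
  by rewrite !big_split /= -!mulr_sumr; ring.
move=> /andP[x0 xL] [a1 [b1 [ha1 [hb1 ->]]]] [a2 [b2 [ha2 [hb2 ->]]]] hn.
have HA : (c a1 a2)%:~R = a * a1%:~R + b * a2%:~R.
  by apply/floor_int/(Hint e x 1 _ _ _ ha1 ha2); left; rewrite xL ltW.
have HB : (c b1 b2)%:~R = a * b1%:~R + b * b2%:~R.
  by apply/floor_int/(Hint e x (-1) _ _ _ hb1 hb2); right; rewrite x0 ltW.
exists (c a1 a2), (c b1 b2); split; first exact: out_slope_comb ha1 ha2 HA.
split; first exact: out_slope_comb hb1 hb2 HB.
by apply: (@intr_inj R); rewrite hn !rmorphD /= HA HB; ring.
Qed.

Lemma comb_int_rational (a b : int) f1 f2 : is_rational f1 -> is_rational f2 ->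
  is_rational (comb a%:~R b%:~R f1 f2).
Proof.
move=> h1 h2; apply: comb_rational h1 h2 _ => e x y k1 k2 *.
by exists (a * k1 + b * k2); rewrite intrD !intrM.
Qed.

Lemma comb_int_div (a b : int) f1 f2 D1 D2 : is_div_of f1 D1 -> is_div_of f2 D2 ->
  is_div_of (comb a%:~R b%:~R f1 f2) (fun p => a * D1 p + b * D2 p).
Proof.
move=> h1 h2 p hp; apply: comb_has_ord hp (h1 p hp) (h2 p hp) _.
  by move=> e x dir k1 k2 *; exists (a * k1 + b * k2); rewrite intrD !intrM.
by rewrite intrD !intrM.
Qed.

End Combinations.

Section Tents.
Variable R : realType.
Variable G : tcurve R.
Local Notation E := (tE G).
Local Notation L := (@len R G).
Local Notation pt := (point G).
Implicit Types (P Q : {set E}) (e : E).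

Definition ind P e : int := if e \in P then 1 else 0.

Definition tent P : pt -> R := fun p =>
  match p with
  | inl _ => 0
  | inr (e, x) => if e \in P then (if x <= L e / 2 then x else L e - x) else 0
  end.

(* the vertex values 0 agree with the formula at the ends of the edge *)
Lemma edge_val_tent P e t : edge_val (tent P) e t =
  if e \in P then (if t <= L e / 2 then t else L e - t) else 0.
Proof.
have Lp := len_pos e; have h0 : 0 <= L e / 2 by lra.
rewrite /edge_val; case: eqP => [->|_]; first by rewrite h0; case: (e \in P).
case: eqP => [->|_] //.
have -> : (L e <= L e / 2) = false by apply/negbTE; rewrite -ltNge; lra.
by rewrite subrr; case: (e \in P).
Qed.

Lemma tent_affine_up P e : affine_on (edge_val (tent P) e) 0 (L e / 2) (ind P e).
Proof.
have Lp := len_pos e; move=> t /andP[t0 t1]; rewrite !edge_val_tent /ind t1.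
have -> : (0 <= L e / 2) = true by apply/idP; lra.
by case: (e \in P); ring.
Qed.

Lemma tent_affine_down P e : affine_on (edge_val (tent P) e) (L e / 2) (L e) (- ind P e).
Proof.
have Lp := len_pos e; move=> t /andP[t0 t1]; rewrite !edge_val_tent /ind lexx.
case: leP => ht.
  have -> : t = L e / 2 by lra.
  by case: (e \in P); rewrite ?oppr0 ?mulrNz ?mulr1z ?mulr0z; ring.
by case: (e \in P); rewrite ?oppr0 ?mulrNz ?mulr1z ?mulr0z; lra.
Qed.

Lemma tent_rational P : is_rational (tent P).
Proof.
apply/rational_affine_offP => e; exists [:: L e / 2].
move=> x y x0 xy yL /(_ (L e / 2)); rewrite mem_seq1 eqxx => /(_ isT).
rewrite negb_and -!leNgt => /orP[h|h].
  by exists (- ind P e); exact: affine_on_sub (@tent_affine_down P e) h (ltW xy) yL.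
by exists (ind P e); exact: affine_on_sub (@tent_affine_up P e) x0 (ltW xy) h.
Qed.

Lemma tent_piece_slope P e x y k : 0 <= x -> x < y -> y <= L e ->
  affine_on (edge_val (tent P) e) x y k -> k = ind P e \/ k = - ind P e.
Proof.
move=> x0 xy yL H.
have [xl|xg] := ltP x (L e / 2).
  left; apply: (affine_on_slope_uniq (a := x) (b := Num.min y (L e / 2)) H
                  (@tent_affine_up P e)) => //.
  - by rewrite lt_min xy xl.
  - by rewrite ge_min lexx.
  - by rewrite ge_min lexx orbT.
right; exact: (affine_on_slope_uniq (a := x) (b := y) H (@tent_affine_down P e)).
Qed.

Lemma tent_out_slope P e x dir a : edge_dir e x dir -> out_slope (tent P) e x dir a ->
  a = ind P e \/ a = - ind P e.
Proof.
case=> [[/andP[x0 xL] ->]|[/andP[x0 xL] ->]] H.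
  have [y [xy yL hs]] := out_slope_affine_right xL H.
  exact: tent_piece_slope x0 xy yL hs.
have [y [y0 yx hs]] := out_slope_affine_left x0 H.
by have := tent_piece_slope y0 yx xL hs; case=> h; [right|left]; lia.
Qed.

Lemma sum_ind P (q : pred E) : \sum_(e | q e) ind P e = #|[set e in P | q e]|%:Z.
Proof.
rewrite /ind -big_mkcondr /= -sum1_card.
by rewrite -natz natr_sum; apply: eq_bigl => e; rewrite !inE andbC.
Qed.

Lemma tent_ord_vertex P v : has_ord (tent P) (inl v) (degP P v)%:Z.
Proof.
have Lp e : 0 < L e / 2 by have := len_pos e; lra.
exists (ind P), (ind P); split.
  by move=> e _; apply: (affine_out_right (Lp e) (@tent_affine_up P e)).
split; last by rewrite !sum_ind /degP PoszD.
move=> e _; rewrite -[ind P e]opprK.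
by apply: affine_out_left (@tent_affine_down P e); have := len_pos e; lra.
Qed.

Lemma tent_ord_edge P e x : 0 < x < L e ->
  has_ord (tent P) (inr (e, x)) (if (e \in P) && (x == L e / 2) then -2 else 0).
Proof.
move=> /andP[x0 xL].
have up := @tent_affine_up P e; have down := @tent_affine_down P e.
have [xl|xg|->] := ltgtP x (L e / 2).
- exists (ind P e), (- ind P e); rewrite andbF subrr; split; last split => //.
    exact: (affine_out_right xl) (affine_on_sub up (ltW x0) (ltW xl) (lexx _)).
  exact: (affine_out_left x0) (affine_on_sub up (lexx _) (ltW x0) (ltW xl)).
- exists (- ind P e), (ind P e); rewrite andbF addNr; split; last split => //.
    exact: (affine_out_right xL) (affine_on_sub down (ltW xg) (ltW xL) (lexx _)).
  rewrite -[X in out_slope _ _ _ _ X]opprK.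
  exact: (affine_out_left xg) (affine_on_sub down (lexx _) (ltW xg) (ltW xL)).
- have Le := len_pos e.
  have Lp1 : 0 < L e / 2 by lra.
  have Lp2 : L e / 2 < L e by lra.
  exists (- ind P e), (- ind P e); split; first exact: affine_out_right Lp2 down.
  split; first exact: affine_out_left Lp1 up.
  by rewrite andbT /ind; case: (e \in P).
Qed.

Lemma tent_div P : in_cycle_space P -> is_div_of (tent P) (fun p => 2 * F_ P p).
Proof.
move=> hP [v _|[e x] hx]; last by rewrite /=; have := tent_ord_edge P hx; case: ifP.
have -> : 2 * F_ P (inl v) = (degP P v)%:Z by rewrite /F_; have := forallP hP v; lia.
exact: tent_ord_vertex.
Qed.

End Tents.

Lemma half_diff_int (R : realFieldType) (k1 k2 : int) : (2 %| k1 - k2)%Z ->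
  exists s : int, s%:~R = 1/2 * k1%:~R + (-1/2) * k2%:~R :> R.
Proof.
move=> h; set q := ((k1 - k2) %/ 2)%Z; exists q.
have /(congr1 (fun z : int => (z%:~R : R))) := divzK h.
rewrite rmorphM rmorphB /= => E.
have : q%:~R * 2 = k1%:~R - k2%:~R :> R by rewrite -E.
lra.
Qed.

Section OddSlopeEdges.
Variable R : realType.
Variable G : tcurve R.
Local Notation E := (tE G).
Local Notation L := (@len R G).
Local Notation pt := (point G).
Variables (f : pt -> R) (D : pt -> int).
Hypotheses (f_rat : is_rational f) (f_div : is_div_of f D).
Hypothesis D_even : forall p, (2 %| D p)%Z.

Definition odd_slope_edges : {set E} :=
  [set e | `[< exists x y k, [/\ 0 <= x, x < y, y <= L e,
               affine_on (edge_val f e) x y k & ~~ (2 %| k)%Z] >]].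

Lemma piece_slope_parity e x y k : 0 <= x -> x < y -> y <= L e ->
  affine_on (edge_val f e) x y k -> (2 %| k - ind odd_slope_edges e)%Z.
Proof.
move=> x0 xy yL H; rewrite /ind inE.
case: asboolP => [[x' [y' [k' [h1 h2 h3 H' hk]]]]|hno].
  have := even_div_slopes_congr f_rat f_div D_even x0 xy yL h1 h2 h3 H H'.
  by move: hk; lia.
rewrite subr0; apply/negPn/negP => hk; apply: hno.
by exists x, y, k; split.
Qed.

Lemma out_slope_parity e x dir a : edge_dir e x dir -> out_slope f e x dir a ->
  (2 %| a - ind odd_slope_edges e)%Z.
Proof.
case=> [[/andP[x0 xL] ->]|[/andP[x0 xL] ->]] H.
  have [y [xy yL hs]] := out_slope_affine_right xL H.
  exact: piece_slope_parity x0 xy yL hs.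
have [y [y0 yx hs]] := out_slope_affine_left x0 H.
by have := piece_slope_parity y0 yx xL hs; lia.
Qed.

(* at a vertex v, D(v) is the sum of the outgoing slopes, which is congruent
   to the degree of v in odd_slope_edges; hence that degree is even *)
Lemma odd_slope_edges_cycle : in_cycle_space odd_slope_edges.
Proof.
apply/forallP => v; set P := odd_slope_edges.
have [a [b [ha [hb h0]]]] := @f_div (inl v) I.
have : (2 %| (degP P v)%:Z - D (inl v))%Z.
  rewrite h0 /degP PoszD -!sum_ind opprD addrACA -!sumrB.
  apply: rpredD; apply: rpred_sum => e /eqP he; rewrite -opprB rpredN.
    by apply: out_slope_parity (ha e he); left; rewrite lexx len_pos.
  by apply: out_slope_parity (hb e he); right; rewrite lexx len_pos.
by have := D_even (inl v); lia.
Qed.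

End OddSlopeEdges.

Section SquareRootsOfZero.
Variable R : realType.
Variable G : tcurve R.
Local Notation E := (tE G).
Local Notation pt := (point G).

Lemma is_div_of_eq (f : pt -> R) (D D' : pt -> int) :
  (forall p, D p = D' p) -> is_div_of f D -> is_div_of f D'.
Proof. by move=> eqD hD p hp; rewrite -eqD; exact: hD. Qed.

Lemma F_divisor (P : {set E}) : is_divisor (F_ P).
Proof.
split.
  case=> [v|[e x]] /= hv; first by exfalso; apply: hv.
  case: ifP => // /andP[_ /eqP xe]; exfalso; apply: hv.
  by rewrite xe; have := len_pos e; lra.
exists ([seq inl v | v <- enum (tV G)] ++ [seq midpoint e | e <- enum E]).
case=> [v|[e x]] /= hne; rewrite mem_cat.
  by apply/orP; left; apply/mapP; exists v => //; rewrite mem_enum.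
move: hne; case: ifP => // /andP[_ /eqP ->] _.
by apply/orP; right; apply/mapP; exists e => //; rewrite mem_enum.
Qed.

Lemma F_sqrt_zero (P : {set E}) : in_cycle_space P -> is_sqrt_zero (F_ P).
Proof.
move=> hP; split; first exact: F_divisor.
exists (tent P); split; first exact: tent_rational.
by apply: is_div_of_eq (tent_div hP) => p; rewrite subr0.
Qed.

(* If F_P - F_Q = div f, then 2 f - (tent P - tent Q) has zero divisor, hence
   is flat; near the source of e this says 2 slope(f) = 1_P(e) - 1_Q(e). *)
Lemma F_injective (P Q : {set E}) : in_cycle_space P -> in_cycle_space Q ->
  lin_equiv (F_ P) (F_ Q) -> P = Q.
Proof.
move=> hP hQ [f [f_rat f_div]].
pose T := comb 1%:~R (-1)%:~R (tent P) (tent Q).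
pose k := comb 2%:~R (-1)%:~R f T.
have k_flat : forall e, affine_on (edge_val k e) 0 (len e) 0.
  apply: zero_div_flat.
    exact (comb_int_rational 2 (-1) f_rat
             (comb_int_rational 1 (-1) (tent_rational P) (tent_rational Q))).
  apply: is_div_of_eq (comb_int_div 2 (-1) f_div
                         (comb_int_div 1 (-1) (tent_div hP) (tent_div hQ))) => p /=.
  ring.
apply/setP => e.
have [y [/andP[y0 yL] [s f_aff]]] := rational_start_piece e f_rat.
have T_aff : affine_on (edge_val T e) 0 y (ind P e - ind Q e).
  apply: affine_comb (affine_on_sub (@tent_affine_up _ _ P e) (lexx _) (ltW y0) yL)
                     (affine_on_sub (@tent_affine_up _ _ Q e) (lexx _) (ltW y0) yL) _.
  by rewrite rmorphB /=; ring.
have k_aff : affine_on (edge_val k e) 0 y (2 * s - (ind P e - ind Q e)).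
  by apply: affine_comb f_aff T_aff _; rewrite rmorphB rmorphM /=; ring.
have yL' : y <= len e by have := len_pos e; lra.
have := affine_on_slope_uniq k_aff (k_flat e) (lexx _) (lexx _) y0 (lexx _) yL'.
by rewrite /ind; case: (e \in P); case: (e \in Q) => //; lia.
Qed.

(* If 2 D = div f, let P be the set of edges where f has odd slopes: P is a
   cycle and (f - tent P) / 2 has integer slopes and divisor D - F_P. *)
Lemma F_surjective (D : pt -> int) : is_sqrt_zero D ->
  exists2 P : {set E}, in_cycle_space P & lin_equiv D (F_ P).
Proof.
move=> [_ [f [f_rat f_div]]].
have D2_even p : (2 %| 2 * D p - 0)%Z by rewrite subr0 dvdz_mulr.
have P_cycle := odd_slope_edges_cycle f_rat f_div D2_even.
exists (odd_slope_edges f) => //.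
exists (comb (1/2) (-1/2) f (tent (odd_slope_edges f))); split.
  apply: (comb_rational f_rat (tent_rational _)) => e x y k1 k2 x0 xy yL h1 h2.
  apply: half_diff_int; have := piece_slope_parity f_rat f_div D2_even x0 xy yL h1.
  by have := tent_piece_slope x0 xy yL h2; case=> ->; lia.
move=> p hp; apply: comb_has_ord hp (f_div p hp) (tent_div P_cycle hp) _.
  move=> e x dir k1 k2 hdir o1 o2; apply: half_diff_int.
  have := out_slope_parity f_rat f_div D2_even hdir o1.
  by have := tent_out_slope hdir o2; case=> ->; lia.
by rewrite /= !rmorphB !rmorphM /=; field.
Qed.

End SquareRootsOfZero.

Theorem proposition3p1 (R : realType) (G : tcurve R) :
  [/\ (forall P : {set tE G}, in_cycle_space P -> is_sqrt_zero (F_ P)),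
      (forall P Q : {set tE G}, in_cycle_space P -> in_cycle_space Q ->
         lin_equiv (F_ P) (F_ Q) -> P = Q) &
      (forall D : point G -> int, is_sqrt_zero D ->
         exists2 P : {set tE G}, in_cycle_space P & lin_equiv D (F_ P))].
Proof.
split; [exact: F_sqrt_zero | exact: F_injective | exact: F_surjective].
Qed.
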